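(* Let $\alpha,\beta,r:\mathbb{Z}\to\mathbb{R}$ with $\beta(t)\neq0$ for all $t\in\mathbb{Z}$, and fix $a\in\mathbb{Z}$. Let $y_1,y_2$ satisfy $y_i(t+2)+\alpha(t)y_i(t+1)+\beta(t)y_i(t)=0$ ($i=1,2$) with $W(t):=y_1(t)y_2(t+1)-y_2(t)y_1(t+1)\neq0$. Then the general solution of $$y(t+2)+\alpha(t)y(t+1)+\beta(t)y(t)=r(t),\qquad t\in\mathbb{Z},$$ is $$y(t)=c_1y_1(t)+c_2y_2(t)+y_1(t)\sum\frac{\prod_{j=a}^{t-1}\beta(j)\sum\frac{r(t)y_1(t+1)}{\prod_{j=a}^{t}\beta(j)}}{y_1(t)y_1(t+1)}$$ or $$y(t)=c_1y_1(t)+c_2y_2(t)+y_2(t)\sum\frac{\prod_{j=a}^{t-1}\beta(j)\sum\frac{r(t)y_2(t+1)}{\prod_{j=a}^{t}\beta(j)}}{y_2(t)y_2(t+1)},$$ where $c_1,c_2$ are arbitrary constants.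
   Context: $\sum f(t)$ denotes an indefinite sum with respect to $t$, i.e. any function $F$ with $F(t+1)-F(t)=f(t)$. *)

From mathcomp Require Import all_boot all_order all_algebra.
From mathcomp Require Import reals.
Set Implicit Arguments. Unset Strict Implicit. Unset Printing Implicit Defensive.
Import Order.TTheory GRing.Theory Num.Theory.
Local Open Scope ring_scope.

(* Discrete product  prod_{j=a}^{t-1} beta(j)  for t : int, with the standard
   convention  prod_{j=a}^{t-1} beta(j) = prod_{j=t}^{a-1} beta(j)^{-1}  when t < a
   (so that P(a) = 1 and P(t+1) = beta(t) P(t) for all t). *)
Definition dprod (R : realType) (beta : int -> R) (a t : int) : R :=
  if (a <= t)%R then \prod_(i < `|t - a|%N) beta (a + (i%:Z))
  else \prod_(i < `|a - t|%N) (beta (t + (i%:Z)))^-1.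

Definition is_indef_sum (R : realType) (F f : int -> R) : Prop :=
  forall t : int, F (t + 1) - F t = f t.

Definition solves (R : realType) (alpha beta r y : int -> R) : Prop :=
  forall t : int, y (t + 2) + alpha t * y (t + 1) + beta t * y t = r t.

From mathcomp Require Import all_boot all_order all_algebra.
From mathcomp Require Import reals.
From mathcomp Require Import zify ring.
Import Order.TTheory GRing.Theory Num.Theory.
Set Implicit Arguments. Unset Strict Implicit. Unset Printing Implicit Defensive.
Local Open Scope ring_scope.

(* Reduction of order.  Let P := dprod beta a, so that P (t + 1) = beta t * P t.
   Writing y = y1 * F and eliminating alpha t with the homogeneous equation for y1,
   the equation for y becomes
     H (t + 1) - beta t * H t = r t * y1 (t + 1),
   where H t := y1 t * y1 (t + 1) * (F (t + 1) - F t).  Dividing by P (t + 1) shows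
   that G := H / P is an indefinite sum of r t * y1 (t + 1) / P (t + 1), which is the
   displayed formula, so y1 * F is a particular solution.  As beta never vanishes,
   the recursion also runs backwards, so homogeneous solutions are determined by
   their values at 0 and 1; hence they are the span of y1 and y2, whose Casoratian
   at 0 is nonzero. *)

Section SecondOrderDifferenceEquation.
Variable R : realType.
Implicit Types (alpha beta r y z : int -> R) (a t : int).

Lemma dprodS beta a t : (forall t, beta t != 0) ->
  dprod beta a (t + 1) = beta t * dprod beta a t.
Proof.
move=> beta_neq0; rewrite /dprod.
case: (lerP a t) => le_at.
  have -> : (a <= t + 1) = true by apply/idP; lia.
  have -> : `|(t + 1 - a)%R|%N = (`|t - a|%N).+1 by lia.
  by rewrite big_ord_recr /= mulrC; congr (_ * _); congr beta; lia.
case: (lerP a (t + 1)) => le_at1.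
  have -> : `|(t + 1 - a)%R|%N = 0%N by lia.
  have -> : `|a - t|%N = 1%N by lia.
  by rewrite big_ord0 big_ord1 addr0 mulfV.
have -> : `|a - t|%N = (`|(a - (t + 1))%R|%N).+1 by lia.
rewrite big_ord_recl /= addr0 mulrA mulfV // mul1r.
by apply: eq_bigr => i _; rewrite /bump /= PoszD addrA.
Qed.

Lemma dprod_neq0 beta a t : (forall t, beta t != 0) -> dprod beta a t != 0.
Proof.
move=> beta_neq0; rewrite /dprod.
by case: ifP => _; apply/prodf_neq0 => i _; rewrite ?invr_eq0.
Qed.

Lemma indef_sum_exists (f : int -> R) : exists F, is_indef_sum F f.
Proof.
exists (fun t => if 0 <= t then \sum_(i < `|t|%N) f i%:Z
                 else - \sum_(i < `|t|%N) f (t + i%:Z)) => t /=.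
case: (lerP 0 t) => ge0_t.
  have -> : (0 <= t + 1) = true by apply/idP; lia.
  have -> : `|(t + 1)%R|%N = (`|t|%N).+1 by lia.
  by rewrite big_ord_recr /= addrAC subrr add0r; congr f; lia.
case: (lerP 0 (t + 1)) => ge0_t1.
  have -> : `|(t + 1)%R|%N = 0%N by lia.
  have -> : `|t|%N = 1%N by lia.
  by rewrite big_ord0 big_ord1 addr0 opprK add0r.
have -> : `|t|%N = (`|(t + 1)%R|%N).+1 by lia.
rewrite big_ord_recl /= addr0 opprK addrC.
rewrite (eq_bigr (fun i : 'I_ _ => f (t + 1 + i%:Z))) ?addrK // => i _.
by rewrite /bump /= PoszD addrA.
Qed.

Section Equation.
Variables alpha beta : int -> R.
Hypothesis beta_neq0 : forall t, beta t != 0.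

Lemma eq_solves r r' y y' :
  r =1 r' -> y =1 y' -> solves alpha beta r y -> solves alpha beta r' y'.
Proof. by move=> er ey sol t; rewrite -er -!ey. Qed.

Lemma solves_lincomb r1 r2 y z (c d : R) :
  solves alpha beta r1 y -> solves alpha beta r2 z ->
  solves alpha beta (fun t => c * r1 t + d * r2 t) (fun t => c * y t + d * z t).
Proof. by move=> sol_y sol_z t; rewrite -sol_y -sol_z; ring. Qed.

Lemma solves_hom_eq0 y : solves alpha beta (fun=> 0) y ->
  y 0 = 0 -> y 1 = 0 -> forall t, y t = 0.
Proof.
move=> sol y0 y1.
have fwd (n : nat) : y n%:Z = 0 /\ y (n%:Z + 1) = 0.
  elim: n => [|n [yn yn1]] //; split; first by rewrite -yn1; congr y; lia.
  by rewrite -(sol n%:Z) yn yn1 !mulr0 !addr0; congr y; lia.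
have bwd (n : nat) : y (- n%:Z) = 0 /\ y (- n%:Z + 1) = 0.
  elim: n => [|n [yn yn1]] //; split; last by rewrite -yn; congr y; lia.
  have := sol (- n.+1%:Z).
  rewrite (_ : - n.+1%:Z + 2 = - n%:Z + 1); last by lia.
  rewrite (_ : - n.+1%:Z + 1 = - n%:Z); last by lia.
  by rewrite yn yn1 mulr0 !add0r => /eqP; rewrite mulf_eq0 (negbTE (beta_neq0 _)) => /eqP.
by case=> n; [case: (fwd n) | rewrite NegzE; case: (bwd n.+1)].
Qed.

Lemma solves_hom_span y1 y2 h :
  solves alpha beta (fun=> 0) y1 -> solves alpha beta (fun=> 0) y2 ->
  y1 0 * y2 1 - y2 0 * y1 1 != 0 -> solves alpha beta (fun=> 0) h ->
  exists c1 c2, forall t, h t = c1 * y1 t + c2 * y2 t.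
Proof.
move=> sol1 sol2 W0_neq0 solh.
set W0 := y1 0 * y2 1 - y2 0 * y1 1.
set c1 := (h 0 * y2 1 - h 1 * y2 0) / W0.
set c2 := (y1 0 * h 1 - y1 1 * h 0) / W0.
exists c1, c2 => t; apply/eqP; rewrite -subr_eq0; apply/eqP; move: t.
apply: solves_hom_eq0; last 2 first.
- by rewrite /= /c1 /c2 /W0; field.
- by rewrite /= /c1 /c2 /W0; field.
apply: eq_solves (solves_lincomb 1 (- 1) solh (solves_lincomb c1 c2 sol1 sol2)).
  by move=> t; ring.
by move=> t; ring.
Qed.

Section ReductionOfOrder.
Variables (r y1 G F : int -> R) (a : int).
Hypothesis sol1 : solves alpha beta (fun=> 0) y1.
Hypothesis y1_neq0 : forall t, y1 t != 0.
Hypothesis sumG : is_indef_sum G (fun t => r t * y1 (t + 1) / dprod beta a (t + 1)).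
Hypothesis sumF : is_indef_sum F (fun t => dprod beta a t * G t / (y1 t * y1 (t + 1))).

Lemma solves_reduction_of_order : solves alpha beta r (fun t => y1 t * F t).
Proof.
move=> t /=.
have e2 : t + 2 = t + 1 + 1 by lia.
have hom1 := sol1 t; rewrite /= e2 in hom1.
have dF1 := sumF (t + 1); have dF0 := sumF t; have dG0 := sumG t.
rewrite dprodS // in dF1 dG0.
move: (dprod_neq0 a t beta_neq0) (y1_neq0 t) (y1_neq0 (t + 1)) (y1_neq0 (t + 1 + 1)).
rewrite e2; move: dF1 dF0 dG0 hom1.
set Y0 := y1 t; set Y1 := y1 (t + 1); set Y2 := y1 (t + 1 + 1).
set P0 := dprod beta a t.
move=> dF1 dF0 dG0 hom1 P_neq0 Y0_neq0 Y1_neq0 Y2_neq0.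
have -> : F (t + 1 + 1) = F (t + 1) + beta t * P0 * G (t + 1) / (Y1 * Y2).
  by rewrite -dF1; ring.
have -> : F (t + 1) = F t + P0 * G t / (Y0 * Y1) by rewrite -dF0; ring.
have -> : G (t + 1) = G t + r t * Y1 / (beta t * P0) by rewrite -dG0; ring.
have -> : alpha t = (- Y2 - beta t * Y0) / Y1.
  apply: (mulIf Y1_neq0); rewrite divfK //.
  by apply/eqP; rewrite -subr_eq0 -hom1; apply/eqP; ring.
by field; rewrite P_neq0 Y0_neq0 Y1_neq0 Y2_neq0 beta_neq0.
Qed.

End ReductionOfOrder.

Lemma solves_general_solution r a y1 y2 y :
  solves alpha beta (fun=> 0) y1 -> solves alpha beta (fun=> 0) y2 ->
  y1 0 * y2 1 - y2 0 * y1 1 != 0 -> (forall t, y1 t != 0) ->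
  solves alpha beta r y <->
  exists (c1 c2 : R) (G F : int -> R),
    is_indef_sum G (fun t => r t * y1 (t + 1) / dprod beta a (t + 1)) /\
    is_indef_sum F (fun t => dprod beta a t * G t / (y1 t * y1 (t + 1))) /\
    forall t, y t = c1 * y1 t + c2 * y2 t + y1 t * F t.
Proof.
move=> sol1 sol2 W0_neq0 y1_neq0; split=> [sol | [c1 [c2 [G [F [sumG [sumF eq_y]]]]]]].
  have [G sumG] := indef_sum_exists (fun t => r t * y1 (t + 1) / dprod beta a (t + 1)).
  have [F sumF] := indef_sum_exists (fun t => dprod beta a t * G t / (y1 t * y1 (t + 1))).
  have solp := solves_reduction_of_order sol1 y1_neq0 sumG sumF.
  have [|c1 [c2 eq_hom]] := solves_hom_span sol1 sol2 W0_neq0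
    (h := fun t => y t - y1 t * F t).
    apply: eq_solves (solves_lincomb 1 (- 1) sol solp); by move=> t; ring.
  by exists c1, c2, G, F; do 2!split=> //; move=> t; rewrite -eq_hom; ring.
have solp := solves_reduction_of_order sol1 y1_neq0 sumG sumF.
apply: eq_solves (solves_lincomb 1 1 (solves_lincomb c1 c2 sol1 sol2) solp).
  by move=> t; ring.
by move=> t /=; rewrite eq_y; ring.
Qed.

End Equation.

End SecondOrderDifferenceEquation.

Theorem theorem4p2 (R : realType) (alpha beta r : int -> R) (a : int)
  (y1 y2 : int -> R)
  (hbeta : forall t, beta t != 0)
  (hy1 : solves alpha beta (fun _ => 0) y1)
  (hy2 : solves alpha beta (fun _ => 0) y2)
  (hW : forall t, y1 t * y2 (t + 1) - y2 t * y1 (t + 1) != 0) :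
  ((forall t, y1 t != 0) ->
   forall y : int -> R,
     solves alpha beta r y <->
     exists (c1 c2 : R) (G F : int -> R),
       is_indef_sum G (fun t => r t * y1 (t + 1) / dprod beta a (t + 1)) /\
       is_indef_sum F (fun t => dprod beta a t * G t / (y1 t * y1 (t + 1))) /\
       forall t, y t = c1 * y1 t + c2 * y2 t + y1 t * F t)
  /\
  ((forall t, y2 t != 0) ->
   forall y : int -> R,
     solves alpha beta r y <->
     exists (c1 c2 : R) (G F : int -> R),
       is_indef_sum G (fun t => r t * y2 (t + 1) / dprod beta a (t + 1)) /\
       is_indef_sum F (fun t => dprod beta a t * G t / (y2 t * y2 (t + 1))) /\
       forall t, y t = c1 * y1 t + c2 * y2 t + y2 t * F t).
Proof.
have W0_neq0 := hW 0; rewrite add0r in W0_neq0.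
split=> [y1_neq0 y | y2_neq0 y]; first exact: solves_general_solution.
have W0_neq0' : y2 0 * y1 1 - y1 0 * y2 1 != 0 by rewrite -opprB oppr_eq0.
rewrite (solves_general_solution hbeta r a y hy2 hy1 W0_neq0' y2_neq0).
by split=> -[c1 [c2 [G [F [sumG [sumF eq_y]]]]]];
  exists c2, c1, G, F; do 2!split=> //; move=> t; rewrite eq_y; ring.
Qed.
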